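(* Let $X$ be a real Banach space and $D\subset X$ dense. Then: (1) $X$ is LOH if and only if for every $\varepsilon>0$ and $x\in D$ there exists $y\in D$ with $\|y\|\ne0$, $\big\|\|y\|x-\|x\|y\big\|>\|y\|(2\|x\|-\varepsilon)$ and $\big\|\|y\|x+\|x\|y\big\|>\|y\|(2\|x\|-\varepsilon)$; (2) $X$ is OH if and only if for every $\varepsilon>0$, $n\in\mathbb{N}$ and $x=(x_1,\dots,x_n)\in D^n$ there exists $y\in D$ with $\|y\|\ne0$ and $\big\|\|y\|x_i+\|x_i\|y\big\|>\|y\|(2\|x_i\|-\varepsilon)$ for all $i=1,\dots,n$.
   Context: $X$ is locally octahedral (LOH) if for every $\varepsilon>0$ and $x\in X$ there is $y\in S_X$ with $\|tx+y\|\ge(1-\varepsilon)(|t|\|x\|+\|y\|)$ for all $t\in\mathbb{R}$. $X$ is octahedral (OH) if for every finite-dimensional subspace $E\subset X$ and $\varepsilon>0$ there is $y\in S_X$ with $\|x+y\|\ge(1-\varepsilon)(\|x\|+\|y\|)$ for all $x\in E$. *)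

From HB Require Import structures.
From mathcomp Require Import all_boot all_order all_algebra.
From mathcomp Require Import all_classical all_reals all_analysis.
Set Implicit Arguments. Unset Strict Implicit. Unset Printing Implicit Defensive.
Import Order.TTheory GRing.Theory Num.Theory.
Import numFieldNormedType.Exports.
Local Open Scope classical_set_scope.
Local Open Scope ring_scope.

(* Linear span of a finite family v_1..v_n: the finite-dimensional
   subspaces of X are exactly such spans. *)
Definition finspan (R : realType) (X : normedModType R) (n : nat)
  (v : 'I_n -> X) : set X :=
  [set x | exists c : 'I_n -> R, x = \sum_(i < n) c i *: v i].

Definition LOH (R : realType) (X : normedModType R) : Prop :=
  forall (eps : R) (x : X), 0 < eps ->
    exists y : X, `|y| = 1 /\
      forall t : R, `|t *: x + y| >= (1 - eps) * (`|t| * `|x| + `|y|).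

Definition OH (R : realType) (X : normedModType R) : Prop :=
  forall (n : nat) (v : 'I_n -> X) (eps : R), 0 < eps ->
    exists y : X, `|y| = 1 /\
      forall x : X, finspan v x -> `|x + y| >= (1 - eps) * (`|x| + `|y|).

From HB Require Import structures.
From mathcomp Require Import all_boot all_order all_algebra.
From mathcomp Require Import all_classical all_reals all_analysis.
From mathcomp Require Import finmap lra.
Import Order.TTheory GRing.Theory Num.Theory.
Import numFieldNormedType.Exports.
Local Open Scope classical_set_scope.
Local Open Scope ring_scope.
Set Implicit Arguments. Unset Strict Implicit. Unset Printing Implicit Defensive.

(* For a unit vector w put oct_defect x w := 2|x| - |x + |x| w|, which lies in
   [0, 2|x|]; the conditions of the statement say exactly that
   oct_defect (+-x) (y/|y|) < eps.  A small defect d at a unit vector a already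
   gives |s a + w| >= (1 - d)(s + 1) for all s >= 0 (triangle inequality on
   either side of s = 1), so LOH at x amounts to small defects at x and -x, and
   OH to small defects on the unit sphere of a finite span.  The defect is
   4-Lipschitz in x and |x|-Lipschitz in w, so x and w can both be moved to
   nearby points of D.  For OH, the unit sphere of a finite span is compact,
   hence covered by finitely many small balls centred in D, and the condition
   for that finite family of points of D suffices. *)

Section Defect.
Variables (R : realFieldType) (X : normedModType R).
Implicit Types (x z a w : X) (eps : R).

Definition oct_defect x w : R := 2 * `|x| - `|x + `|x| *: w|.

Lemma oct_defectZ (c : R) x w : 0 <= c ->
  oct_defect (c *: x) w = c * oct_defect x w.
Proof.
move=> c0; rewrite /oct_defect normrZ ger0_norm // -scalerA -scalerDr normrZ.
by rewrite ger0_norm // mulrBr mulrCA.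
Qed.

Lemma oct_defect0 w : oct_defect 0 w = 0.
Proof. by rewrite /oct_defect normr0 mulr0 scale0r addr0 normr0 subrr. Qed.

Lemma oct_defect_normalize z w :
  oct_defect z w = `|z| * oct_defect (`|z|^-1 *: z) w.
Proof.
have [->|z0] := eqVneq z 0; first by rewrite oct_defect0 normr0 mul0r.
by rewrite -oct_defectZ ?scalerA ?mulfV ?scale1r ?normr_eq0.
Qed.

Lemma oct_defect_unit a w : `|a| = 1 -> oct_defect a w = 2 - `|a + w|.
Proof. by move=> a1; rewrite /oct_defect a1 mulr1 scale1r. Qed.

Lemma oct_defect_ge0 x w : `|w| = 1 -> 0 <= oct_defect x w.
Proof.
move=> w1; rewrite subr_ge0; apply: le_trans (ler_normD _ _) _.
by rewrite normrZ w1 normr_id mulr1 mulr2n mulrDl mul1r.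
Qed.

Lemma oct_defect_lipschitzr x w w' :
  oct_defect x w' <= oct_defect x w + `|x| * `|w - w'|.
Proof.
rewrite /oct_defect.
have -> : x + `|x| *: w = (x + `|x| *: w') + `|x| *: (w - w').
  by rewrite scalerBr -addrA (addrC (_ *: w')) subrK.
have := ler_normD (x + `|x| *: w') (`|x| *: (w - w')).
by rewrite normrZ normr_id; lra.
Qed.

Lemma oct_defect_lipschitzl x x' w : `|w| = 1 ->
  oct_defect x w <= oct_defect x' w + 4 * `|x - x'|.
Proof.
move=> w1; rewrite /oct_defect.
have -> : x' + `|x'| *: w = (x + `|x| *: w) + ((x' - x) + (`|x'| - `|x|) *: w).
  by rewrite scalerBl addrACA !subrKC.
have h1 := ler_normD (x + `|x| *: w) ((x' - x) + (`|x'| - `|x|) *: w).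
have h2 := ler_normD (x' - x) ((`|x'| - `|x|) *: w).
rewrite normrZ w1 mulr1 in h2.
have h3 := ler_dist_dist x' x; have h4 := lerB_dist x x'.
rewrite (distrC x' x) in h2 h3; lra.
Qed.

Lemma oct_defect_ray a w (s : R) : `|a| = 1 -> `|w| = 1 -> 0 <= s ->
  (s + 1) * (1 - oct_defect a w) <= `|s *: a + w|.
Proof.
move=> a1 w1 s0; have := oct_defect_ge0 a w1; rewrite oct_defect_unit // => aw2.
have [s1|s1] := leP 1 s.
- have := ler_normD (s *: a + w) ((s - 1) *: w).
  have -> : s *: a + w + (s - 1) *: w = s *: (a + w).
    by rewrite scalerBl scale1r scalerDr -addrA subrKC.
  rewrite !normrZ w1 !ger0_norm ?subr_ge0 //; nra.
- have := ler_normD (s *: a + w) ((1 - s) *: a).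
  have -> : s *: a + w + (1 - s) *: a = a + w.
    by rewrite scalerBl scale1r addrAC subrKC.
  have s1' : 0 <= 1 - s by lra.
  rewrite normrZ a1 (ger0_norm s1'); nra.
Qed.

Lemma oct_ineq_of_defect z w eps : `|w| = 1 -> 0 <= eps ->
  oct_defect z w <= eps * `|z| -> (1 - eps) * (`|z| + `|w|) <= `|z + w|.
Proof.
move=> w1 eps0; rewrite w1.
have [->|z0] := eqVneq z 0; first by rewrite normr0 !add0r w1 => _; lra.
set a := `|z|^-1 *: z; have a1 : `|a| = 1 by rewrite normfZV.
have za : z = `|z| *: a by rewrite scalerA mulfV ?normr_eq0 // scale1r.
rewrite oct_defect_normalize -/a mulrC ler_pM2r ?normr_gt0 // => hd.
rewrite [in X in _ <= X]za.
apply: le_trans _ (oct_defect_ray a1 w1 (normr_ge0 z)).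
rewrite mulrC ler_wpM2l ?addr_ge0 //; lra.
Qed.

Lemma oct_defect_of_ineq x w eta : `|w| = 1 ->
  (1 - eta) * (`| `|x|^-1 *: x| + 1) <= `| `|x|^-1 *: x + w| ->
  oct_defect x w <= 2 * eta * `|x|.
Proof.
move=> w1; have [->|x0] := eqVneq x 0; first by rewrite oct_defect0 normr0 mulr0.
set a := `|x|^-1 *: x; have a1 : `|a| = 1 by rewrite normfZV.
rewrite a1 oct_defect_normalize oct_defect_unit // [_ * `|x|]mulrC.
by rewrite ler_pM2l ?normr_gt0 //; lra.
Qed.

Lemma oct_defect_le_line x w eps :
  oct_defect x w <= eps * `|x| -> oct_defect (- x) w <= eps * `|x| ->
  forall t, oct_defect (t *: x) w <= eps * `|t *: x|.
Proof.
move=> hp hn t; rewrite normrZ; have [t0|t0] := leP 0 t.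
  by rewrite oct_defectZ // ger0_norm // mulrCA ler_wpM2l.
have -> : t *: x = (- t) *: (- x) by rewrite scalerN scaleNr opprK.
have t0' : 0 <= - t by rewrite oppr_ge0 ltW.
by rewrite oct_defectZ // ltr0_norm // mulrCA ler_wpM2l.
Qed.

Lemma oct_defect_normalize_ltE x y eps : y != 0 ->
  (oct_defect x (`|y|^-1 *: y) < eps) =
  (`|y| * (2 * `|x| - eps) < `| `|y| *: x + `|x| *: y|).
Proof.
move=> y0; have ny : 0 < `|y| by rewrite normr_gt0.
have -> : `|y| *: x + `|x| *: y = `|y| *: (x + `|x| *: (`|y|^-1 *: y)).
  by rewrite scalerDr !scalerA mulrAC mulfV ?gt_eqF // mul1r.
by rewrite normrZ normr_id ltr_pM2l // /oct_defect ltrBlDr addrC -ltrBlDr.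
Qed.

Lemma oct_defect_normalizeN_ltE x y eps : y != 0 ->
  (oct_defect (- x) (`|y|^-1 *: y) < eps) =
  (`|y| * (2 * `|x| - eps) < `| `|y| *: x - `|x| *: y|).
Proof.
move=> y0.
by rewrite oct_defect_normalize_ltE // normrN scalerN (addrC (- _)) distrC.
Qed.

Lemma dense_near (D : set X) z (r : R) : dense D -> 0 < r ->
  exists2 d, D d & `|z - d| < r.
Proof.
move=> hD r0.
have [d [zd Dd]] := hD (ball z r) (ex_intro _ z (ballxx z r0)) (ball_open z r).
by exists d => //; move: zd; rewrite -ball_normE.
Qed.

Lemma dense_direction (D : set X) y0 (eta : R) :
  dense D -> `|y0| = 1 -> 0 < eta ->
  exists d, [/\ D d, d != 0 & `|y0 - `|d|^-1 *: d| <= eta].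
Proof.
move=> hD y1 eta0.
have r0 : 0 < Num.min (eta / 2) (1 / 2) by rewrite lt_min !divr_gt0.
have [d Dd] := dense_near y0 hD r0; rewrite lt_min => /andP[yd1 yd2].
have d0 : d != 0 by rewrite -normr_eq0 gt_eqF //; have := lerB_dist y0 d; lra.
exists d; split => //.
have -> : y0 - `|d|^-1 *: d = (y0 - d) + (1 - `|d|^-1) *: d.
  by rewrite scalerBl scale1r addrA subrK.
apply: le_trans (ler_normD _ _) _.
rewrite normrZ -[X in _ * X]normr_id -normrM mulrBl mul1r mulVf ?normr_eq0 //.
have := ler_dist_dist d y0; rewrite y1 (distrC d y0); lra.
Qed.

Lemma dense_oct_direction (I : Type) (D : set X) (x : I -> X) (M eps : R) :
  dense D -> 0 < eps -> (forall i, `|x i| <= M) ->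
  (forall eta, 0 < eta ->
    exists2 y0, `|y0| = 1 & forall i, oct_defect (x i) y0 <= eta * `|x i|) ->
  exists y, [/\ D y, y != 0 & forall i, oct_defect (x i) (`|y|^-1 *: y) < eps].
Proof.
move=> hD eps0 xM hy; have M1 : 0 < 2 * (`|M| + 1) by have := normr_ge0 M; lra.
set eta := eps / (2 * (`|M| + 1)).
have eta0 : 0 < eta by rewrite divr_gt0.
have etaM : eta * (2 * (`|M| + 1)) = eps by rewrite divfK ?gt_eqF.
have [y0 y1 hy0] := hy eta eta0.
have [d [Dd d0 hd]] := dense_direction hD y1 eta0.
exists d; split => // i; apply: le_lt_trans (oct_defect_lipschitzr (x i) y0 _) _.
have := hy0 i; have := le_trans (xM i) (ler_norm M).
have : `|x i| * `|y0 - `|d|^-1 *: d| <= `|x i| * eta by rewrite ler_wpM2l.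
nra.
Qed.
End Defect.

Section FiniteSpan.
Variables (R : realType) (X : normedModType R).

Lemma lincomb_continuous n (v : 'I_n -> X) :
  continuous (fun c : 'rV[R]_n => \sum_i c ord0 i *: v i).
Proof.
move=> c; elim: (index_enum _) => [|i s IH].
  under eq_fun do rewrite big_nil.
  exact: cst_continuous.
under eq_fun do rewrite big_cons.
have hi : {for c, continuous (fun c : 'rV[R]_n => c ord0 i *: v i)}.
  exact/continuousZr_tmp/coord_continuous.
exact: (continuousD hi IH).
Qed.

Lemma normalize_continuous (p : X) : p != 0 ->
  {for p, continuous (fun q : X => `|q|^-1 *: q)}.
Proof.
move=> p0; apply: continuousZ => //.
by apply: continuousV; [rewrite normr_eq0 | exact: norm_continuous].
Qed.

Lemma finspan_generator n (v : 'I_n -> X) i : finspan v (v i).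
Proof.
exists (fun j => (j == i)%:R).
rewrite (bigD1 i) //= eqxx scale1r big1 ?addr0 // => j /negPf ->.
by rewrite scale0r.
Qed.

Lemma finspan_scale n (v : 'I_n -> X) (r : R) z :
  finspan v z -> finspan v (r *: z).
Proof.
move=> [c ->]; exists (fun j => r * c j).
by rewrite scaler_sumr; apply: eq_bigr => j _; rewrite scalerA.
Qed.

Definition free_family n (v : 'I_n -> X) :=
  forall c : 'I_n -> R, \sum_i c i *: v i = 0 -> forall i, c i = 0.

Lemma finspan_dep_lift n (v : 'I_n.+1 -> X) (c : 'I_n.+1 -> R) k :
  \sum_i c i *: v i = 0 -> c k != 0 ->
  finspan v `<=` finspan (fun j : 'I_n => v (lift k j)).
Proof.
move=> hc ck z [a ->].
exists (fun j => a (lift k j) - a k / c k * c (lift k j)).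
rewrite (bigD1_ord k) //= in hc; rewrite (bigD1_ord k) //=.
have hs : \sum_(j < n) c (lift k j) *: v (lift k j) = - (c k *: v k).
  by move/eqP: hc; rewrite addrC addr_eq0 => /eqP.
under [RHS]eq_bigr do rewrite scalerBl -scalerA.
by rewrite sumrB -scaler_sumr hs scalerN opprK scalerA mulfVK // addrC.
Qed.

Lemma finspan_sub_free n (v : 'I_n -> X) :
  exists m (w : 'I_m -> X), free_family w /\ finspan v `<=` finspan w.
Proof.
elim: n v => [|n IH] v; first by exists 0%N, v; split => // c _ [].
have [fv|] := pselect (free_family v); first by exists n.+1, v; split.
move=> /existsNP [c /not_implyP [hc /existsNP [k /eqP ck]]].
have [m [w [fw vw]]] := IH (fun j => v (lift k j)).
by exists m, w; split => //; apply: subset_trans (finspan_dep_lift hc ck) vw.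
Qed.

Lemma lincombZ n (w : 'I_n -> X) (r : R) (c : 'rV[R]_n) :
  \sum_i (r *: c) ord0 i *: w i = r *: \sum_i c ord0 i *: w i.
Proof. by rewrite scaler_sumr; apply: eq_bigr => i _; rewrite mxE scalerA. Qed.

Lemma unit_sphere_rV_compact m : compact [set c : 'rV[R]_m | `|c| = 1].
Proof.
apply: bounded_closed_compact.
  by exists 1; split => // M M1 c /= ->; rewrite ltW.
apply: (@preimage_closed _ _ (fun c : 'rV[R]_m => `|c|) [set 1]).
  by move=> c _; exact: norm_continuous.
exact: closed_eq.
Qed.

Lemma unit_finspan_sub_compact n (v : 'I_n -> X) :
  exists2 K : set X, compact K & [set z | finspan v z /\ `|z| = 1] `<=` K.
Proof.
have [m [w [fw vw]]] := finspan_sub_free v.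
pose Phi (c : 'rV[R]_m) := \sum_i c ord0 i *: w i.
pose S := [set c : 'rV[R]_m | `|c| = 1].
exists ((fun c => `|Phi c|^-1 *: Phi c) @` S).
  apply: continuous_compact; last exact: unit_sphere_rV_compact.
  apply: continuous_in_subspaceT => c /set_mem Sc.
  have Phi0 : Phi c != 0.
    apply/eqP => /fw c0; move: Sc; rewrite /S /= (_ : c = 0) ?normr0.
      by move/eqP; rewrite eq_sym oner_eq0.
    by apply/matrixP => i j; rewrite (ord1 i) mxE c0.
  exact: continuous_comp (@lincomb_continuous m w c) (normalize_continuous Phi0).
move=> z [/vw [a za] z1].
pose c : 'rV[R]_m := \row_i a i.
have Pc : Phi c = z by rewrite za; apply: eq_bigr => i _; rewrite mxE.
have c0 : c != 0.
  apply/eqP => c0; move: z1; rewrite -Pc c0 /Phi big1 => [|i _].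
    by rewrite normr0 => /eqP; rewrite eq_sym oner_eq0.
  by rewrite mxE scale0r.
exists (`|c|^-1 *: c); first exact: normfZV.
rewrite /Phi lincombZ -/(Phi c) Pc normrZ z1 mulr1 normfV normr_id invrK scalerA.
by rewrite mulfV ?normr_eq0 // scale1r.
Qed.

Lemma compact_dense_net (K D : set X) (del : R) :
  compact K -> dense D -> 0 < del ->
  exists m (d : 'I_m -> X),
    (forall j, D (d j)) /\ forall z, K z -> exists j, `|z - d j| < del.
Proof.
rewrite compact_cover => cK hD del0.
have KD : K `<=` cover D (fun d => ball d del).
  move=> z Kz; have [d Dd zd] := dense_near z hD del0.
  by exists d => //; rewrite -ball_normE /= distrC.
have [F FD KF] := cK X D _ (fun d _ => ball_open d del) KD.
pose s := enum_fset F.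
exists (size s), (fun j => nth 0 s j); split.
  by move=> j; rewrite -in_setE; apply: FD; exact: mem_nth.
move=> z Kz; have [c Fc zc] := KF z Kz.
have cs : (index c s < size s)%N by rewrite index_mem.
exists (Ordinal cs); rewrite /= nth_index //.
by move: zc; rewrite -ball_normE /= distrC.
Qed.
End FiniteSpan.

Section Characterization.
Variables (R : realType) (X : normedModType R) (D : set X).
Hypothesis hD : dense D.

Lemma LOH_dense_witness : LOH X -> forall eps (x : X), 0 < eps ->
  exists y, [/\ D y, y != 0, oct_defect x (`|y|^-1 *: y) < eps
                            & oct_defect (- x) (`|y|^-1 *: y) < eps].
Proof.
move=> hL eps x eps0.
have [b|eta eta0|y [Dy y0 hy]] := dense_oct_direction
    (x := fun b : bool => if b then x else - x) (M := `|x|) hD eps0.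
- by case: b; rewrite ?normrN.
- have eta2 : 0 < eta / 2 by lra.
  have [y0 [y1 ht]] := hL (eta / 2) x eta2.
  exists y0 => // -[].
  + have h := ht `|x|^-1; rewrite -normrZ y1 in h.
    have := oct_defect_of_ineq y1 h; lra.
  + have h := ht (- `|x|^-1).
    rewrite normrN scaleNr -scalerN -(normrN x) -normrZ y1 in h.
    have := oct_defect_of_ineq y1 h; rewrite normrN; lra.
- by exists y; split => //; [exact: (hy true) | exact: (hy false)].
Qed.

Lemma dense_witness_LOH : (forall eps (x : X), 0 < eps -> D x ->
  exists y, [/\ y != 0, oct_defect x (`|y|^-1 *: y) < eps
                      & oct_defect (- x) (`|y|^-1 *: y) < eps]) -> LOH X.
Proof.
move=> hC eps x eps0; set u := `|x|^-1 *: x.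
have eps8 : 0 < eps / 8 by lra.
have eps2 : 0 < eps / 2 by lra.
have [d Dd ud] := dense_near u hD eps8.
have [y [y0 hp hn]] := hC (eps / 2) d eps2 Dd.
set w := `|y|^-1 *: y; have w1 : `|w| = 1 by rewrite normfZV.
have defect_near a b :
    `|a - b| < eps / 8 -> oct_defect b w < eps / 2 -> oct_defect a w <= eps.
  by move=> ab hb; have := oct_defect_lipschitzl a b w1; lra.
exists w; split => // t; rewrite -normrZ.
apply: (oct_ineq_of_defect w1 (ltW eps0)); apply: oct_defect_le_line.
  by rewrite oct_defect_normalize mulrC ler_wpM2r // (defect_near _ d).
rewrite oct_defect_normalize normrN mulrC ler_wpM2r // scalerN.
by rewrite (defect_near _ (- d)) // -opprD normrN.
Qed.

Lemma OH_dense_witness : OH X -> forall eps n (x : 'I_n -> X), 0 < eps ->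
  exists y, [/\ D y, y != 0 & forall i, oct_defect (x i) (`|y|^-1 *: y) < eps].
Proof.
move=> hO eps n x eps0; apply: (dense_oct_direction (M := \sum_i `|x i|) hD eps0).
  by move=> i; rewrite (bigD1 i) //= lerDl sumr_ge0.
move=> eta eta0; have eta2 : 0 < eta / 2 by lra.
have [y0 [y1 ht]] := hO n x (eta / 2) eta2.
exists y0 => // i; have := ht _ (finspan_scale `|x i|^-1 (finspan_generator x i)).
by rewrite y1 => /(oct_defect_of_ineq y1); lra.
Qed.

Lemma dense_witness_OH :
  (forall eps n (x : 'I_n -> X), 0 < eps -> (forall i, D (x i)) ->
    exists y, y != 0 /\ forall i, oct_defect (x i) (`|y|^-1 *: y) < eps) ->
  OH X.
Proof.
move=> hC n v eps eps0; have eps8 : 0 < eps / 8 by lra.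
have eps2 : 0 < eps / 2 by lra.
have [K cK vK] := unit_finspan_sub_compact v.
have [m [d [Dd dK]]] := compact_dense_net cK hD eps8.
have [y [y0 hy]] := hC (eps / 2) m d eps2 Dd.
set w := `|y|^-1 *: y; have w1 : `|w| = 1 by rewrite normfZV.
exists w; split => // z vz; apply: (oct_ineq_of_defect w1 (ltW eps0)).
rewrite oct_defect_normalize mulrC ler_wpM2r //.
have [->|z0] := eqVneq z 0; first by rewrite normr0 invr0 scale0r oct_defect0 ltW.
have [j hj] := dK _ (vK _ (conj (finspan_scale _ vz) (normfZV z0))).
by have := oct_defect_lipschitzl (`|z|^-1 *: z) (d j) w1; have := hy j; lra.
Qed.
End Characterization.

Theorem lemma6p1 (R : realType) (X : completeNormedModType R) (D : set X)
  (hD : dense D) :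
  (LOH X <->
    (forall (eps : R) (x : X), 0 < eps -> D x ->
      exists y : X, D y /\ `|y| != 0 /\
        `| `|y| *: x - `|x| *: y| > `|y| * (2 * `|x| - eps) /\
        `| `|y| *: x + `|x| *: y| > `|y| * (2 * `|x| - eps)))
  /\
  (OH X <->
    (forall (eps : R) (n : nat) (x : 'I_n -> X), 0 < eps ->
      (forall i, D (x i)) ->
      exists y : X, D y /\ `|y| != 0 /\
        forall i, `| `|y| *: x i + `|x i| *: y| > `|y| * (2 * `|x i| - eps))).
Proof.
split; split.
- move=> hL eps x eps0 _.
  have [y [Dy y0 hp hn]] := LOH_dense_witness hD hL x eps0.
  exists y; rewrite normr_eq0.
  by rewrite -oct_defect_normalize_ltE -?oct_defect_normalizeN_ltE.
- move=> hC; apply: (dense_witness_LOH hD) => eps x eps0 Dx.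
  have [y [_ [y0 [hn hp]]]] := hC eps x eps0 Dx; rewrite normr_eq0 in y0.
  by exists y; rewrite oct_defect_normalize_ltE ?oct_defect_normalizeN_ltE.
- move=> hO eps n x eps0 _.
  have [y [Dy y0 hy]] := OH_dense_witness hD hO x eps0.
  exists y; split=> //; rewrite normr_eq0; split=> // i.
  by rewrite -oct_defect_normalize_ltE ?hy.
- move=> hC; apply: (dense_witness_OH hD) => eps n x eps0 Dx.
  have [y [_ [y0 hy]]] := hC eps n x eps0 Dx; rewrite normr_eq0 in y0.
  by exists y; split=> // i; rewrite oct_defect_normalize_ltE.
Qed.
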